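(* Let $\mathcal{F}$ be a class of maps satisfying: (i) $\mathcal{F}(Y,Y)$ contains the identity map for every Banach space $Y$; (ii) $\mathcal{F}(Y,Z)$ is a vector space for all Banach spaces $Y,Z$; (iii) if $A\colon Y\to U$ and $B\colon V\to Z$ are affine maps and $F\in\mathcal{F}(U,V)$, then $B\circ F\circ A\in\mathcal{F}(Y,Z)$. Then an affine equivariant integrator map $\phi$ is $\mathcal{F}$-invariant preserving if and only if it is $\mathcal{F}$-functionally equivariant.
   Context: All spaces are real Banach spaces; $\mathfrak{X}(Y)$ denotes the smooth vector fields on $Y$. A class of maps $\mathcal F$ assigns to each pair of Banach spaces $Y,Z$ a set $\mathcal F(Y,Z)$ of Gâteaux differentiable maps $Y\to Z$. An integrator map $\phi$ is a collection of smooth maps $\phi_Y\colon\mathfrak{X}(Y)\to\mathfrak{X}(Y)$, one for each Banach space $Y$; write $\phi(f)$. For Gâteaux differentiable $\chi\colon Y\to U$, $f\sim_\chi g$ means $\chi'(y)f(y)=g(\chi(y))$ for all $y$. $\phi$ is affine equivariant if for every affine $A\colon Y\to U$ between Banach spaces, $f\sim_A g$ implies $\phi(f)\sim_A\phi(g)$. Given $F\colon Y\to Z$ and $f\in\mathfrak X(Y)$, the augmented vector field is $g\in\mathfrak X(Y\times Z)$, $g(y,z)=(f(y),F'(y)f(y))$; $\phi$ is $F$-functionally equivariant if $\phi(f)\sim_{(\mathrm{id},F)}\phi(g)$ for all $f\in\mathfrak X(Y)$, where $(\mathrm{id},F)(y)=(y,F(y))$. $\phi$ is $F$-invariant preserving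 if for all $f\in\mathfrak X(Y)$, $F'f=0$ (i.e. $F'(y)f(y)=0$ for all $y$) implies $F'\phi(f)=0$. $\phi$ is $\mathcal F$-functionally equivariant (resp. $\mathcal F$-invariant preserving) if it is $F$-functionally equivariant (resp. $F$-invariant preserving) for all $F\in\mathcal F(Y,Z)$ and all Banach spaces $Y,Z$. *)

From HB Require Import structures.
From mathcomp Require Import all_boot all_order all_algebra.
From mathcomp Require Import all_classical all_reals all_analysis.
Set Implicit Arguments. Unset Strict Implicit. Unset Printing Implicit Defensive.
Import Order.TTheory GRing.Theory Num.Theory.
Import numFieldNormedType.Exports.
Local Open Scope classical_set_scope.
Local Open Scope ring_scope.

Section prodc.
Context {R : realType} {U V : completeNormedModType R}.
HB.instance Definition _ := isPointed.Build (U * V)%type (0, 0).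
Lemma prod_cauchy_cvg (F : set_system (U * V)%type) :
  ProperFilter F -> cauchy F -> cvg F.
Proof.
move=> FF /cauchyP cF.
have c1 : cauchy (fst @ F).
  apply/cauchyP => e e0; have [[x y] Fb] := cF e e0; exists x.
  move: Fb; rewrite /fmap /=; apply: filterS => -[a b] [] //.  
have c2 : cauchy (snd @ F).
  apply/cauchyP => e e0; have [[x y] Fb] := cF e e0; exists y.
  move: Fb; rewrite /fmap /=; apply: filterS => -[a b] [] //.  
have Ha : cvg (fst @ F) by apply: cauchy_cvg.
have Hb : cvg (snd @ F) by apply: cauchy_cvg.
apply/cvg_ex; exists (lim (fst @ F), lim (snd @ F)).
have := cvg_pair Ha Hb.
suff -> : (fun x : U * V => (x.1, x.2)) @ F = F by move=> h; apply: h.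
rewrite /fmap /=.
apply/funext => A; congr F; apply/funext => -[x y] //.
Qed.
HB.instance Definition _ := Uniform_isComplete.Build (U * V)%type prod_cauchy_cvg.
End prodc.

Section Defs.
Variable R : realType.

Definition gderiv (Y Z : normedModType R) (F : Y -> Z) (y v : Y) : Z :=
  derive F y v.

Definition gateaux_diff (Y Z : normedModType R) (F : Y -> Z) : Prop :=
  forall y : Y,
    (forall v : Y, derivable F y v) /\
    (forall (a : R) (u v : Y),
        gderiv F y (a *: u + v) = a *: gderiv F y u + gderiv F y v) /\
    continuous (gderiv F y).

(* C^k maps in the (Michal--Bastiani) sense: C^0 = continuous,
   C^{k+1} = all directional derivatives exist and (x,v) |-> F'(x)v is C^k.
   On Banach spaces C^infty in this sense coincides with Frechet C^infty. *)
Fixpoint Ck (k : nat) (X W : normedModType R) (h : X -> W) : Prop :=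
  match k with
  | 0 => continuous h
  | k'.+1 => (forall x v : X, derivable h x v) /\
             Ck k' (fun p : X * X => derive h p.1 p.2)
  end.

Definition smooth (X W : normedModType R) (h : X -> W) : Prop :=
  forall k, Ck k h.

Definition vfield (Y : normedModType R) (f : Y -> Y) : Prop := smooth f.

Definition affine (Y U : normedModType R) (A : Y -> U) : Prop :=
  exists (L : {linear Y -> U}) (c : U),
    continuous L /\ forall y, A y = L y + c.

Definition related (Y U : normedModType R) (chi : Y -> U)
    (f : Y -> Y) (g : U -> U) : Prop :=
  forall y, gderiv chi y (f y) = g (chi y).

Definition integrator_map :=
  forall Y : completeNormedModType R, (Y -> Y) -> (Y -> Y).

Definition integrator_ok (phi : integrator_map) : Prop :=
  forall (Y : completeNormedModType R) (f : Y -> Y), vfield f -> vfield (phi Y f).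

Definition affine_equivariant (phi : integrator_map) : Prop :=
  forall (Y U : completeNormedModType R) (A : Y -> U) (f : Y -> Y) (g : U -> U),
    affine A -> vfield f -> vfield g ->
    related A f g -> related A (phi Y f) (phi U g).

Definition augmented (Y Z : normedModType R) (F : Y -> Z) (f : Y -> Y) :
    Y * Z -> Y * Z :=
  fun p => (f p.1, gderiv F p.1 (f p.1)).

Definition graph_map (Y Z : normedModType R) (F : Y -> Z) : Y -> Y * Z :=
  fun y => (y, F y).

Definition F_functionally_equivariant (phi : integrator_map)
    (Y Z : completeNormedModType R) (F : Y -> Z) : Prop :=
  forall f : Y -> Y, vfield f -> vfield (augmented F f) ->
    related (graph_map F) (phi Y f) (phi _ (augmented F f)).

Definition F_invariant_preserving (phi : integrator_map)
    (Y Z : completeNormedModType R) (F : Y -> Z) : Prop :=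
  forall f : Y -> Y, vfield f ->
    (forall y, gderiv F y (f y) = 0) ->
    (forall y, gderiv F y (phi Y f y) = 0).

Definition map_class :=
  forall Y Z : completeNormedModType R, set (Y -> Z).

Definition class_ok (C : map_class) : Prop :=
  forall (Y Z : completeNormedModType R) (F : Y -> Z), C Y Z F -> gateaux_diff F.

Definition class_functionally_equivariant (phi : integrator_map) (C : map_class) :=
  forall (Y Z : completeNormedModType R) (F : Y -> Z),
    C Y Z F -> F_functionally_equivariant phi F.

Definition class_invariant_preserving (phi : integrator_map) (C : map_class) :=
  forall (Y Z : completeNormedModType R) (F : Y -> Z),
    C Y Z F -> F_invariant_preserving phi F.

End Defs.

(* The augmented field g on Y * Z is fst-related to f and, when F'f = 0,
   snd-related to the zero field.  As fst and snd are affine, the first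
   component of phi(g) is phi(f) and the second one is then phi(0) = 0, the
   latter by equivariance under constant maps.  Functional equivariance says
   precisely that F'phi(f) is that second component.  Conversely, g is tangent
   to the level sets of G(y, z) = z - F(y), and G lies in the class by
   (i)-(iii); if phi preserves G, the second component of phi(g) is F'phi(f),
   which is functional equivariance. *)

From HB Require Import structures.
From mathcomp Require Import all_boot all_order all_algebra.
From mathcomp Require Import all_classical all_reals all_analysis.
Import Order.TTheory GRing.Theory Num.Theory.
Import numFieldNormedType.Exports.
Local Open Scope classical_set_scope.
Local Open Scope ring_scope.

Section DirectionalDerivative.
Context {R : numFieldType}.

Lemma derive_line_eq {V V' W : normedModType R} (f : V -> W) (g : V' -> W)
    a v b w :
  (forall t : R, f (t *: v + a) = g (t *: w + b)) ->
  (derivable f a v <-> derivable g b w) /\ 'D_v f a = 'D_w g b.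
Proof.
move=> fg.
have fagb : f a = g b by have := fg 0; rewrite !scale0r !add0r.
suff quotient_eq : (fun t : R => t^-1 *: ((f \o shift a) (t *: v) - f a)) =
                   (fun t : R => t^-1 *: ((g \o shift b) (t *: w) - g b)).
  by rewrite /derivable /derive quotient_eq.
by apply/funext => t; rewrite /= /shift fg fagb.
Qed.

Lemma derive_linear {V W : normedModType R} (P : V -> W) x v :
  linear P -> derivable P x v /\ 'D_v P x = P v.
Proof.
move=> linP.
have [-> ->] := derive_line_eq P id x v (P x) (P v) (fun t => linP t v x).
by split; [exact: derivable_id | exact: derive_id].
Qed.

Lemma derive_comp_linear {V V' W : normedModType R} (P : V' -> V) (h : V -> W)
    q r :
  linear P -> derivable h (P q) (P r) ->
  derivable (h \o P) q r /\ 'D_r (h \o P) q = 'D_(P r) h (P q).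
Proof.
move=> linP dh.
have [iff_d ->] := derive_line_eq (h \o P) h q r (P q) (P r)
  (fun t => congr1 h (linP t r q)).
by split=> //; apply/iff_d.
Qed.

Lemma derive_pair {V W1 W2 : normedModType R} (f : V -> W1) (g : V -> W2) a v :
  derivable f a v -> derivable g a v ->
  derivable (fun x => (f x, g x)) a v /\
  'D_v (fun x => (f x, g x)) a = ('D_v f a, 'D_v g a).
Proof.
move=> df dg.
have lim_pair :
    (fun t : R => t^-1 *: (((fun x => (f x, g x)) \o shift a) (t *: v) -
                           (f a, g a))) @ 0^' --> ('D_v f a, 'D_v g a).
  exact: (cvg_pair df dg).
by split; [apply/cvg_ex; eexists; exact: lim_pair | exact: cvg_lim].
Qed.

End DirectionalDerivative.

Section Smoothness.
Context {R : realType}.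

Lemma Ck_cst k (X W : normedModType R) (c : W) : Ck k (fun _ : X => c).
Proof.
elim: k X W c => [|k IHk] X W c /=; first by move=> x; exact: cvg_cst.
split; first by move=> x v; exact: derivable_cst.
have -> : (fun p : X * X => 'D_p.2 (fun _ : X => c) p.1) = fun _ => 0.
  by apply/funext => p; exact: derive_cst.
exact: IHk.
Qed.

Lemma Ck_pair k (X W1 W2 : normedModType R) (f : X -> W1) (g : X -> W2) :
  Ck k f -> Ck k g -> Ck k (fun x => (f x, g x)).
Proof.
elim: k X W1 W2 f g => [|k IHk] X W1 W2 f g /=.
  by move=> cf cg x; apply: cvg_pair; [exact: cf | exact: cg].
move=> [df cf] [dg cg].
have dfg x v := derive_pair _ _ _ _ (df x v) (dg x v).
split=> [x v|]; first exact: (dfg x v).1.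
have -> : (fun p : X * X => 'D_p.2 (fun x => (f x, g x)) p.1) =
          (fun p => ('D_p.2 f p.1, 'D_p.2 g p.1)).
  by apply/funext => p; exact: (dfg p.1 p.2).2.
exact: IHk.
Qed.

Lemma Ck_comp_linear k (X' X W : normedModType R) (P : X' -> X) (h : X -> W) :
  linear P -> continuous P -> Ck k h -> Ck k (h \o P).
Proof.
elim: k X' X W P h => [|k IHk] X' X W P h linP contP /=.
  by move=> ch q; exact: continuous_comp (contP q) (ch (P q)).
move=> [dh ch].
have dhP q r := derive_comp_linear _ _ q r linP (dh (P q) (P r)).
split=> [q r|]; first exact: (dhP q r).1.
have -> : (fun p : X' * X' => 'D_p.2 (h \o P) p.1) =
          (fun p : X * X => 'D_p.2 h p.1) \o (fun p => (P p.1, P p.2)).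
  by apply/funext => p; exact: (dhP p.1 p.2).2.
apply: IHk ch; first by move=> a u v /=; rewrite !linP.
move=> p; apply: cvg_pair.
- exact: continuous_comp cvg_fst (contP p.1).
- exact: continuous_comp cvg_snd (contP p.2).
Qed.

End Smoothness.

Section Equivariance.
Context {R : realType}.

Lemma affine_linear {Y U : normedModType R} (L : {linear Y -> U}) :
  continuous L -> affine L.
Proof. by move=> contL; exists L, 0; split => // y; rewrite addr0. Qed.

Lemma affine_cst {Y U : normedModType R} (c : U) : affine (fun _ : Y => c).
Proof.
exists (\0 : {linear Y -> U}), c; split; first by move=> x; exact: cvg_cst.
by move=> y; rewrite /= add0r.
Qed.

Lemma gderiv_linear {Y U : normedModType R} (L : {linear Y -> U}) y v :
  gderiv L y v = L v.
Proof. exact: (derive_linear L y v (linearP L)).2. Qed.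

Lemma gderiv_graph_map {Y Z : normedModType R} (F : Y -> Z) y w :
  derivable F y w -> gderiv (graph_map F) y w = (w, gderiv F y w).
Proof.
move=> dF; rewrite /gderiv (derive_pair _ _ _ _ (@derivable_id _ _ y w) dF).2.
by rewrite derive_id.
Qed.

Definition graph_defect {Y Z : normedModType R} (F : Y -> Z) (p : Y * Z) : Z :=
  p.2 - F p.1.

Lemma gderiv_graph_defect {Y Z : normedModType R} (F : Y -> Z) p v :
  derivable F p.1 v.1 ->
  gderiv (graph_defect F) p v = v.2 - gderiv F p.1 v.1.
Proof.
move=> dF.
have [dFfst DFfst] := derive_comp_linear fst F p v (linearP fst) dF.
have [dsnd Dsnd] := derive_linear snd p v (linearP snd).
by rewrite /gderiv /graph_defect deriveB // -DFfst -Dsnd.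
Qed.

Variable phi : integrator_map R.
Hypothesis phi_affine : affine_equivariant phi.

Lemma affine_equivariant_linear {Y U : completeNormedModType R}
    (L : {linear Y -> U}) (f : Y -> Y) (g : U -> U) :
  continuous L -> vfield f -> vfield g ->
  (forall y, L (f y) = g (L y)) -> forall y, L (phi Y f y) = phi U g (L y).
Proof.
move=> contL vf vg Lfg y; rewrite -(gderiv_linear L y).
apply: (phi_affine _ _ _ _ _ (affine_linear L contL) vf vg) => x.
by rewrite gderiv_linear.
Qed.

Lemma affine_equivariant_zero (Z : completeNormedModType R) (z : Z) :
  phi Z (fun _ => 0) z = 0.
Proof.
have v0 : vfield (fun _ : Z => 0 : Z) by move=> k; exact: Ck_cst.
have rel0 : related (fun _ : Z => z) (fun _ => 0) (fun _ => 0).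
  by move=> x; rewrite /gderiv derive_cst.
by rewrite -(phi_affine _ _ _ _ _ (affine_cst z) v0 v0 rel0 z) /gderiv derive_cst.
Qed.

Lemma functionally_equivariant_of_defect_preserving
    {Y Z : completeNormedModType R} (F : Y -> Z) :
  (forall y w, derivable F y w) ->
  F_invariant_preserving phi (graph_defect F) ->
  F_functionally_equivariant phi F.
Proof.
move=> dF defect_preserved f vf vg y; set g := augmented F f.
have phi_fst p : (phi _ g p).1 = phi Y f p.1.
  by apply: (affine_equivariant_linear fst) => // q; exact: cvg_fst.
have phi_snd p : (phi _ g p).2 = gderiv F p.1 (phi Y f p.1).
  have g_defect q : gderiv (graph_defect F) q (g q) = 0.
    by rewrite gderiv_graph_defect // subrr.
  move: (defect_preserved g vg g_defect p).
  by rewrite gderiv_graph_defect // phi_fst => /eqP; rewrite subr_eq0 => /eqP.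
by rewrite /related gderiv_graph_map // [RHS]surjective_pairing phi_fst phi_snd.
Qed.

Lemma invariant_preserving_of_functionally_equivariant
    {Y Z : completeNormedModType R} (F : Y -> Z) :
  (forall y w, derivable F y w) ->
  F_functionally_equivariant phi F -> F_invariant_preserving phi F.
Proof.
move=> dF F_equivariant f vf Ff0 y.
have g_eq : augmented F f = fun p => (f p.1, 0).
  by apply/funext => p; rewrite /augmented Ff0.
have v0 : vfield (fun _ : Z => 0 : Z) by move=> k; exact: Ck_cst.
have vg : vfield (augmented F f).
  rewrite g_eq => k; apply: Ck_pair; last exact: Ck_cst.
  by apply: Ck_comp_linear (linearP fst) _ (vf k) => p; exact: cvg_fst.
have phi_snd p : (phi _ (augmented F f) p).2 = 0.
  rewrite (affine_equivariant_linear snd _ (fun _ : Z => 0)) //.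
  - exact: affine_equivariant_zero.
  - by move=> q; exact: cvg_snd.
  - by move=> q; rewrite g_eq.
move: (F_equivariant f vf vg y).
by rewrite /related gderiv_graph_map // => /(congr1 snd) /= ->.
Qed.

End Equivariance.

Theorem theorem2p9 (R : realType) (C : map_class R) (phi : integrator_map R) :
  class_ok C ->
  (* (i) identity *)
  (forall Y : completeNormedModType R, C Y Y id) ->
  (* (ii) vector space *)
  (forall Y Z : completeNormedModType R, C Y Z (fun _ => 0)) ->
  (forall (Y Z : completeNormedModType R) (F G : Y -> Z),
      C Y Z F -> C Y Z G -> C Y Z (fun y => F y + G y)) ->
  (forall (Y Z : completeNormedModType R) (a : R) (F : Y -> Z),
      C Y Z F -> C Y Z (fun y => a *: F y)) ->
  (* (iii) closure under affine pre/post-composition *)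
  (forall (Y U V Z : completeNormedModType R) (A : Y -> U) (B : V -> Z) (F : U -> V),
      affine A -> affine B -> C U V F -> C Y Z (B \o F \o A)) ->
  integrator_ok phi ->
  affine_equivariant phi ->
  (class_invariant_preserving phi C <-> class_functionally_equivariant phi C).
Proof.
move=> C_gateaux C_id _ C_add C_scale C_affine _ phi_affine.
have C_derivable Y Z F : C Y Z F -> forall y w, derivable F y w.
  by move=> CF y w; exact: (C_gateaux _ _ F CF y).1.
split=> [C_preserving | C_equivariant] Y Z F CF.
- apply: (functionally_equivariant_of_defect_preserving _ phi_affine F
    (C_derivable _ _ _ CF)).
  have affine_id (U : completeNormedModType R) : affine (@idfun U).
    exact: affine_linear idfun (fun=> cvg_id).
  have C_snd : C (Y * Z)%type Z (idfun \o idfun \o snd).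
    exact: C_affine (affine_linear snd (fun=> cvg_snd)) (affine_id Z) (C_id Z).
  have C_Ffst : C (Y * Z)%type Z (idfun \o F \o fst).
    exact: C_affine (affine_linear fst (fun=> cvg_fst)) (affine_id Z) CF.
  have -> : graph_defect F =
      (fun p => (idfun \o idfun \o snd) p + (-1) *: (idfun \o F \o fst) p).
    by apply/funext => p; rewrite scaleN1r.
  exact/C_preserving/C_add/C_scale.
- exact: (invariant_preserving_of_functionally_equivariant _ phi_affine F
    (C_derivable _ _ _ CF) (C_equivariant _ _ _ CF)).
Qed.
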